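(* Let $\Delta=\{\mathscr J_1,\dots,\mathscr J_m\}$ be any collection of subsets of $\{1,\dots,n\}$ and let $\mathcal K=\bigcap_i\mathscr J_i$. Suppose that $Q$ is a prime ideal of $R$ containing $I_\Delta+L_{\mathcal K}$. Then for each $\mathscr J_i$ there is some $\mathscr J_j$ such that $Q$ contains $L_{\mathscr J_i\cap\mathscr J_j}$.
   Context: $\mathbb K$ is a field, $R=\mathbb K[x_{i_1,\dots,i_n}:1\le i_j\le a_j]$, $A=(x_{i_1,\dots,i_n})$ the generic table. For a tuple $\sigma$ with $\sigma_j\in\{1,\dots,a_j\}\cup\{+\}$, $x_\sigma$ is the sum of all $x_{i_1,\dots,i_n}$ with $i_j=\sigma_j$ whenever $\sigma_j\ne+$. For $\mathscr J=\{j_1<\dots<j_m\}\subseteq\{1,\dots,n\}$ the margin $A_{\mathscr J}$ is the table whose $(i_1,\dots,i_m)$ entry is $x_\sigma$ with $\sigma_{j_r}=i_r$, $\sigma_j=+$ for $j\notin\mathscr J$; $L_{\mathscr J}$ is the ideal generated by the entries of $A_{\mathscr J}$. For a table $B$ with entries in $R$, $I(B)$ is the ideal generated by its generalized $2\times2$ minors $\det\begin{pmatrix} b_{i_1,\dots,i_m} & b_{j_1,\dots,j_{l-1},i_l,j_{l+1},\dots,j_m}\\ b_{i_1,\dots,i_{l-1},j_l,i_{l+1},\dots,i_m} & b_{j_1,\dots,j_m}\end{pmatrix}$, and $I_\Delta=\sum_{\mathscr J\in\Delta}I(A_{\mathscr J})$. *)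

From HB Require Import structures.
From mathcomp Require Import all_boot all_algebra.
From mathcomp Require Import mpoly.
Set Implicit Arguments. Unset Strict Implicit. Unset Printing Implicit Defensive.
Import GRing.Theory.
Local Open Scope ring_scope.

(* Cells of the n-way table: tuples (i_1,...,i_n) with i_j in 'I_(a j)
   (0-based version of 1 <= i_j <= a_j). *)
Definition cell (n : nat) (a : 'I_n -> nat) : finType :=
  {dffun forall j : 'I_n, 'I_(a j)}.

(* The ring R = K[x_c : c cell], variables numbered through enum_rank. *)
Definition polyR (K : fieldType) (n : nat) (a : 'I_n -> nat) :=
  {mpoly K[#|cell a|]}.

Definition xvar (K : fieldType) (n : nat) (a : 'I_n -> nat) (c : cell a)
  : polyR K a := 'X_(enum_rank c).

(* x_sigma, where sigma_j = f j for j in J and sigma_j = + for j notin J: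
   the sum of all x_d with d j = f j for j in J. *)
Definition xsigma (K : fieldType) (n : nat) (a : 'I_n -> nat)
  (J : {set 'I_n}) (f : 'I_n -> nat) : polyR K a :=
  \sum_(d : cell a | [forall j in J, (d j : nat) == f j]) @xvar K n a d.

Definition cellnat (n : nat) (a : 'I_n -> nat) (c : cell a) : 'I_n -> nat :=
  fun j => (c j : nat).

Definition upd (n : nat) (a : 'I_n -> nat) (c d : cell a) (l : 'I_n)
  : 'I_n -> nat :=
  fun k => if k == l then (d l : nat) else (c k : nat).

(* Generators of L_J: the entries of the margin A_J (the entry indexed by the
   restriction of c to J). *)
Definition L_gen (K : fieldType) (n : nat) (a : 'I_n -> nat) (J : {set 'I_n})
  (p : polyR K a) : Prop :=
  exists c : cell a, p = @xsigma K n a J (cellnat c).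

(* Generators of I(A_J): generalized 2x2 minors of the margin A_J. *)
Definition I_gen (K : fieldType) (n : nat) (a : 'I_n -> nat) (J : {set 'I_n})
  (p : polyR K a) : Prop :=
  exists (c d : cell a) (l : 'I_n), l \in J /\
    p = @xsigma K n a J (cellnat c) * @xsigma K n a J (cellnat d)
        - @xsigma K n a J (upd d c l) * @xsigma K n a J (upd c d l).

Definition IDelta_gen (K : fieldType) (n : nat) (a : 'I_n -> nat)
  (Delta : {set {set 'I_n}}) (p : polyR K a) : Prop :=
  exists2 J, J \in Delta & @I_gen K n a J p.

Definition gen_ideal (R : comRingType) (S : R -> Prop) (x : R) : Prop :=
  exists (k : nat) (r s : 'I_k -> R),
    (forall i, S (s i)) /\ x = \sum_(i < k) r i * s i.

Definition is_ideal (R : comRingType) (Q : R -> Prop) : Prop :=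
  [/\ Q 0, (forall x y, Q x -> Q y -> Q (x + y)) &
      (forall r x, Q x -> Q (r * x))].

Definition prime_ideal (R : comRingType) (Q : R -> Prop) : Prop :=
  [/\ is_ideal Q, ~ Q 1 & (forall x y, Q (x * y) -> Q x \/ Q y)].

From HB Require Import structures.
From mathcomp Require Import all_boot all_algebra.
From mathcomp Require Import mpoly.
From Stdlib Require Import Classical.

(* Write x_S(c) for the entry of the margin A_S at the restriction of the cell
   c to S, and c[j := m] for c with j-th coordinate m.  Summing the
   generalized minors of A_J over coordinates outside T, with j in T, shows
   that Q contains x_T(c) x_J(d) - x_T(c[j := d_j]) x_J(d[j := c_j]).  If
   moreover L_(T \ j) is in Q, summing these over d_j gives
   x_T(c) x_(J \ j)(d) in Q, so by primality L_T or L_(J \ j) is in Q.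
   Growing T one coordinate at a time from K = \bigcap Delta up to J_i thus
   yields either L_(J_i) in Q, and J_j = J_i works, or some j in J_i \ K with
   L_(J_i \ j) in Q; then any J_j in Delta missing j works, since
   J_i /\ J_j is contained in J_i \ j and L_A is contained in L_B for A in B. *)

Set Implicit Arguments. Unset Strict Implicit. Unset Printing Implicit Defensive.
Import GRing.Theory.
Local Open Scope ring_scope.

Section Ideals.

Variables (R : comRingType) (Q : R -> Prop).
Hypothesis QI : is_ideal Q.

Lemma ideal_sum (I : Type) (r : seq I) (P : pred I) (F : I -> R) :
  (forall i, P i -> Q (F i)) -> Q (\sum_(i <- r | P i) F i).
Proof. by case: QI => Q0 QD _; apply: big_ind. Qed.

Lemma ideal_mull x y : Q y -> Q (x * y).
Proof. by case: QI => _ _; apply. Qed.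

Lemma ideal_mulr x y : Q x -> Q (x * y).
Proof. by rewrite mulrC; apply: ideal_mull. Qed.

Lemma ideal_add x y : Q x -> Q y -> Q (x + y).
Proof. by case: QI => _ QD _; apply: QD. Qed.

Lemma gen_ideal_min (S : R -> Prop) x :
  (forall p, S p -> Q p) -> gen_ideal S x -> Q x.
Proof.
move=> SQ [k [r [s [Ss ->]]]]; apply: ideal_sum => i _.
exact/ideal_mull/SQ.
Qed.

End Ideals.

Lemma gen_ideal_gen (R : comRingType) (S : R -> Prop) x : S x -> gen_ideal S x.
Proof.
by move=> Sx; exists 1%N, (fun=> 1), (fun=> x); rewrite big_ord1 mul1r.
Qed.

Lemma prime_ideal_all_mul (R : comRingType) (Q : R -> Prop) (I J : Type)
    (f : I -> R) (g : J -> R) :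
  (forall x y, Q (x * y) -> Q x \/ Q y) -> (forall i j, Q (f i * g j)) ->
  (forall i, Q (f i)) \/ (forall j, Q (g j)).
Proof.
move=> Qprime Qfg.
case: (classic (forall j, Q (g j))) => [|/not_all_ex_not [j Qgj]]; first by right.
by left=> i; case: (Qprime _ _ (Qfg i j)).
Qed.

Section SetInduction.

Variable T : finType.

Lemma subset_setU1_ind (P : {set T} -> Prop) (A B : {set T}) : A \subset B ->
  (forall (X : {set T}) (k : T), A \subset X -> X \subset B -> k \in B :\: X ->
     P X -> P (k |: X)) ->
  P A -> P B.
Proof.
move=> sAB Pstep PA.
suff grow m X : #|B :\: X| = m -> A \subset X -> X \subset B -> P X -> P B.
  exact: grow erefl (subxx A) sAB PA.
elim: m X => [|m IH] X cardBX sAX sXB PX.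
  suff -> : B = X by [].
  by apply/eqP; rewrite eqEsubset sXB -setD_eq0 -cards_eq0 cardBX.
have [k kBX] : exists k, k \in B :\: X by apply/set0Pn; rewrite -card_gt0 cardBX.
apply: (IH (k |: X)); last exact: Pstep.
- by move: cardBX; rewrite (cardsD1 k) kBX setDDl setUC => -[].
- exact: subset_trans sAX (subsetUr _ _).
- by rewrite subUset sub1set sXB; case/setDP: kBX => ->.
Qed.

Lemma subset_setD1_ind (P : {set T} -> Prop) (A B : {set T}) : A \subset B ->
  (forall (X : {set T}) (k : T), A \subset X -> X \subset B -> k \in X :\: A ->
     P X -> P (X :\ k)) ->
  P B -> P A.
Proof.
move=> sAB Pstep PB; rewrite -[A]setCK.
apply: (@subset_setU1_ind (fun Y => P (~: Y)) (~: B)); rewrite ?setCS ?setCK //.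
move=> Y k sBY sYA kAY PY.
have -> : k |: Y = ~: (~: Y :\ k) by rewrite setCD setCK setUC.
rewrite setCK; apply: Pstep => //; try by rewrite -setCS setCK.
by move: kAY; rewrite !inE andbC.
Qed.

End SetInduction.

Section Margins.

Variables (K : fieldType) (n : nat) (a : 'I_n -> nat).

Local Notation entry J c := (@xsigma K n a J (cellnat c)).

Definition setc (c : cell a) (j : 'I_n) (m : 'I_(a j)) : cell a :=
  [ffun i => insubd (c i) (if i == j then val m else val (c i))].
Arguments setc : clear implicits.

Lemma setcE (c : cell a) j m i :
  (setc c j m i : nat) = if i == j then (m : nat) else c i.
Proof.
rewrite /setc ffunE val_insubd; case: eqP => [->|_]; by rewrite ltn_ord.
Qed.

Lemma setc_eq (c : cell a) j m : setc c j m j = m.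
Proof. by apply: val_inj => /=; rewrite setcE eqxx. Qed.

Lemma setc_neq (c : cell a) j m i : i != j -> setc c j m i = c i.
Proof. by move=> ij; apply: val_inj => /=; rewrite setcE (negbTE ij). Qed.

Lemma setc_setc (c : cell a) j m m' : setc (setc c j m) j m' = setc c j m'.
Proof.
by apply/ffunP => i; apply: val_inj => /=; rewrite !setcE; case: eqP.
Qed.

Lemma setcC (c : cell a) j k m m' :
  j != k -> setc (setc c j m) k m' = setc (setc c k m') j m.
Proof.
move=> jk; apply/ffunP => i; apply: val_inj => /=; rewrite !setcE.
by case: (eqVneq i k) => [->|//]; rewrite eq_sym (negbTE jk).
Qed.

Lemma upd_setc (c d : cell a) j : upd c d j =1 cellnat (setc c j (d j)).
Proof. by move=> i; rewrite /upd /cellnat setcE. Qed.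

Lemma eq_xsigma J f g : f =1 g -> @xsigma K n a J f = @xsigma K n a J g.
Proof.
by move=> fg; apply: eq_bigl => d; apply: eq_forallb => i; rewrite fg.
Qed.

Lemma xsigma_setD1 (S : {set 'I_n}) (c : cell a) j : j \in S ->
  entry (S :\ j) c = \sum_(m < a j) entry S (setc c j m).
Proof.
move=> jS; rewrite /xsigma.
under [RHS]eq_bigr => m _ do rewrite big_mkcond.
rewrite exchange_big /= big_mkcond /=; apply: eq_bigr => d _.
rewrite (bigD1 (d j)) //= big1 ?addr0.
  congr (if _ then _ else _).
  apply/forallP/forallP => h i; apply/implyP => iS.
    rewrite /cellnat setcE; case: (eqVneq i j) => [->//|ij].
    by have := implyP (h i); rewrite in_setD1 ij iS; apply.
  move: iS; rewrite in_setD1 => /andP [ij iS].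
  by have := implyP (h i) iS; rewrite /cellnat setcE (negbTE ij).
move=> m /negbTE mj; case: ifP => // /forallP h.
have := implyP (h j) jS; rewrite /cellnat setcE eqxx => /eqP e.
by move: mj; rewrite (_ : d j = m) ?eqxx //; apply: val_inj.
Qed.

Variable Q : polyR K a -> Prop.
Hypothesis QI : is_ideal Q.

Definition contains_L (S : {set 'I_n}) := forall c : cell a, Q (entry S c).

(* For A = B these are the generators of I(A_B) swapping coordinate j. *)
Definition contains_minors (A B : {set 'I_n}) (j : 'I_n) := forall c d : cell a,
  Q (entry A c * entry B d - entry A (setc c j (d j)) * entry B (setc d j (c j))).

Lemma contains_L_gen_ideal (S : {set 'I_n}) :
  contains_L S -> forall x, gen_ideal (@L_gen K n a S) x -> Q x.
Proof. by move=> QS x; apply: gen_ideal_min => // _ [c ->]. Qed.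

Lemma contains_L_subset (A B : {set 'I_n}) :
  A \subset B -> contains_L B -> contains_L A.
Proof.
move=> sAB; apply: subset_setD1_ind => // X k _ _ /setDP [kX _] QX c.
by rewrite xsigma_setD1 //; apply: ideal_sum.
Qed.

Lemma contains_minors_I (J : {set 'I_n}) j :
  (forall p, I_gen J p -> Q p) -> j \in J -> contains_minors J J j.
Proof.
move=> QIJ jJ c d; apply: QIJ; exists c, d, j; split => //.
by rewrite [X in _ - X]mulrC !(eq_xsigma _ (upd_setc _ _ _)).
Qed.

Lemma contains_minors_subset (A B : {set 'I_n}) j :
  A \subset B -> j \in A -> contains_minors B B j -> contains_minors A B j.
Proof.
move=> sAB jA.
apply: (subset_setD1_ind (P := fun X => contains_minors X B j)) => //.
move=> X k _ _ /setDP [kX kA] QX c d.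
have kj : k != j by apply: contraNneq kA => ->.
rewrite !xsigma_setD1 // !mulr_suml -sumrB; apply: ideal_sum => // m _.
by have := QX (setc c k m) d; rewrite setc_neq 1?eq_sym // -setcC 1?eq_sym.
Qed.

Lemma contains_L_setU1 (S J : {set 'I_n}) j :
  (forall x y, Q (x * y) -> Q x \/ Q y) ->
  j \in J :\: S -> contains_L S -> contains_minors (j |: S) J j ->
  contains_L (j |: S) \/ contains_L (J :\ j).
Proof.
move=> Qprime /setDP [jJ jS] QS QT.
have QTJ (c d : cell a) : Q (entry (j |: S) c * entry (J :\ j) d).
  pose e (m : 'I_(a j)) := entry (j |: S) (setc c j m) * entry J (setc d j (c j)).
  rewrite xsigma_setD1 // mulr_sumr (eq_bigr _ (fun m _ => esym (subrK (e m) _))).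
  rewrite big_split /= -mulr_suml -xsigma_setD1 ?setU11 // setU1K //.
  apply: ideal_add => //; last exact: ideal_mulr.
  apply: ideal_sum => // m _.
  by have := QT c (setc d j m); rewrite setc_eq setc_setc.
exact: prime_ideal_all_mul QTJ.
Qed.

Lemma contains_L_grow (S J : {set 'I_n}) :
  (forall x y, Q (x * y) -> Q x \/ Q y) -> S \subset J -> contains_L S ->
  (forall j, j \in J -> contains_minors J J j) ->
  contains_L J \/ exists2 j, j \in J :\: S & contains_L (J :\ j).
Proof.
move=> Qprime sSJ QS QJ.
pose P X := contains_L X \/ exists2 j, j \in J :\: S & contains_L (J :\ j).
apply: (subset_setU1_ind (P := P)) sSJ _ (or_introl QS).
move=> X k sSX sXJ kJX [QX|]; last by right.
have kJ : k \in J by case/setDP: kJX.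
have QXk : contains_minors (k |: X) J k.
  apply: contains_minors_subset; last exact: QJ.
    by rewrite subUset sub1set kJ.
  exact: setU11.
case: (contains_L_setU1 Qprime kJX QX QXk) => [|QJk]; first by left.
by right; exists k => //; apply: subsetP (setDS J sSX) k kJX.
Qed.

End Margins.

Theorem lemma6p3 (K : fieldType) (n : nat) (a : 'I_n -> nat)
  (Delta : {set {set 'I_n}}) (Q : polyR K a -> Prop) :
  prime_ideal Q ->
  (forall x, gen_ideal (fun p => @IDelta_gen K n a Delta p \/
                                 @L_gen K n a (\bigcap_(J in Delta) J) p) x -> Q x) ->
  forall Ji, Ji \in Delta ->
    exists2 Jj, Jj \in Delta &
      forall x, gen_ideal (@L_gen K n a (Ji :&: Jj)) x -> Q x.
Proof.
case=> QI _ Qprime QH Ji JiDelta.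
have QK : contains_L Q (\bigcap_(J in Delta) J).
  by move=> c; apply/QH/gen_ideal_gen; right; exists c.
have QJi j : j \in Ji -> contains_minors Q Ji Ji j.
  by apply: contains_minors_I => p Ip; apply/QH/gen_ideal_gen; left; exists Ji.
have sKJi : \bigcap_(J in Delta) J \subset Ji by apply: bigcap_inf.
have [QJi'|[j /setDP [_ jK] QJij]] := contains_L_grow QI Qprime sKJi QK QJi.
  by exists Ji => //; rewrite setIid; exact (contains_L_gen_ideal QI QJi').
have [Jj JjDelta jJj] : exists2 Jj, Jj \in Delta & j \notin Jj.
  apply/exists_inP; rewrite -negb_forall_in; apply: contra jK => /forall_inP.
  by move/bigcapP.
have sJiJj : Ji :&: Jj \subset Ji :\ j.
  apply/subsetP => i /setIP [iJi iJj]; rewrite in_setD1 iJi andbT.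
  by apply: contraNneq jJj => <-.
exists Jj => //.
exact (contains_L_gen_ideal QI (contains_L_subset QI sJiJj QJij)).
Qed.
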